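(* Let $\ell\ge2$ and $t\ge0$ be integers, $C\subseteq\mathbb{F}_q^n$ a linear code and $A,B\subseteq\mathbb{F}_q^n$ linear codes with $A*B\subseteq C^\perp$, $\dim A>t$, $\mathrm{d}(A^\perp)>t$ and $\mathrm{d}(A)+\mathrm{d}(C)>n$. Let $\mathbf{y}=\mathbf{c}+\mathbf{e}$ with $\mathbf{c}\in C$, $\mathrm{w}(\mathbf{e})=t$, $I_{\mathbf{e}}=\mathrm{supp}(\mathbf{e})$. Let $M_1=\{\mathbf{a}\in A\mid \langle \mathbf{a}*\mathbf{y},\mathbf{b}\rangle=0\ \forall \mathbf{b}\in B\}$, and for $i=2,\dots,\ell$, $M_i=\{\mathbf{a}\in A\mid \langle \mathbf{a}*\mathbf{y}^i,\mathbf{v}\rangle=0\ \forall \mathbf{v}\in (B^{\perp}*C^{i-1})^{\perp}\}$, and $M=\bigcap_{i=1}^\ell M_i$. If $A(I_{\mathbf{e}})=M$, then $$\dim B+\sum_{i=2}^{\ell}\dim (B^\perp*C^{i-1})^\perp\ge t.$$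
   Context: All codes are $\mathbb{F}_q$-linear subspaces of $\mathbb{F}_q^n$. $\mathbf{u}*\mathbf{v}=(u_1v_1,\dots,u_nv_n)$, $\mathbf{u}^i=(u_1^i,\dots,u_n^i)$; $A*B$ is the span of all $\mathbf{a}*\mathbf{b}$; $C^1=C$, $C^i=C*C^{i-1}$. $\langle\mathbf{u},\mathbf{v}\rangle=\sum_iu_iv_i$, $X^\perp$ the dual. $\mathrm{w}$ Hamming weight, $\mathrm{d}$ minimum distance, $\mathrm{supp}(\mathbf{x})=\{i:x_i\ne0\}$. $A(J)=\{\mathbf{a}\in A: a_j=0\ \forall j\in J\}\subseteq\mathbb{F}_q^n$. *)

From HB Require Import structures.
From mathcomp Require Import all_boot all_order all_algebra.
Set Implicit Arguments. Unset Strict Implicit. Unset Printing Implicit Defensive.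
Import GRing.Theory.
Local Open Scope ring_scope.

Section Codes.
Variables (F : finFieldType) (n : nat).
Local Notation vec := 'rV[F]_n.

Definition smul (u v : vec) : vec := \row_j (u 0 j * v 0 j).
Definition spow (u : vec) (i : nat) : vec := \row_j (u 0 j ^+ i).
Definition inner (u v : vec) : F := \sum_(j < n) u 0 j * v 0 j.

Definition star (A B : {vspace vec}) : {vspace vec} :=
  <<[seq smul ab.1 ab.2 | ab <- enum [pred ab : vec * vec | (ab.1 \in A) && (ab.2 \in B)]]>>%VS.

(* C^0 := span of the all-ones vector (never used), C^1 = C, C^i = C * C^(i-1) *)
Fixpoint cpow (C : {vspace vec}) (i : nat) : {vspace vec} :=
  match i with
  | 0 => <<[:: (const_mx 1 : vec)%R]>>%VS
  | 1 => C
  | i'.+1 => star C (cpow C i')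
  end.

Definition dual (X : {vspace vec}) : {vspace vec} :=
  <<[seq v <- enum vec | [forall x : vec, (x \in X) ==> (inner x v == 0%R)]]>>%VS.

Definition supp (u : vec) : {set 'I_n} := [set j | u 0 j != 0].
Definition weight (u : vec) : nat := #|supp u|.

(* minimum distance; convention d({0}) = n+1 *)
Definition dmin (A : {vspace vec}) : nat :=
  \big[minn/n.+1]_(a : vec | (a \in A) && (a != 0%R)) weight a.

Definition punct_zero (A : {vspace vec}) (J : {set 'I_n}) : {vspace vec} :=
  <<[seq a <- enum vec | (a \in A) && [forall j in J, a 0%R j == 0%R]]>>%VS.

Definition annih (A : {vspace vec}) (u : vec) (V : {vspace vec}) : {vspace vec} :=
  <<[seq a <- enum vec | (a \in A) && [forall v : vec, (v \in V) ==> (inner (smul a u) v == 0%R)]]>>%VS.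

Definition M1 (A B : {vspace vec}) (y : vec) : {vspace vec} := annih A y B.
Definition Mi (A B C : {vspace vec}) (y : vec) (i : nat) : {vspace vec} :=
  annih A (spow y i) (dual (star (dual B) (cpow C i.-1))).
Definition Mall (A B C : {vspace vec}) (y : vec) (l : nat) : {vspace vec} :=
  (M1 A B y :&: \bigcap_(2 <= i < l.+1) Mi A B C y i)%VS.

End Codes.

From mathcomp Require Import all_boot all_order all_algebra.
From mathcomp Require Import zify.
Set Implicit Arguments. Unset Strict Implicit. Unset Printing Implicit Defensive.
Import GRing.Theory.
Local Open Scope ring_scope.

(* Each M_i is cut out of A by dim V_i linear conditions (one per basis vector
   of the space V_i it is tested against), so M has codimension at most
   dim B + sum_i dim V_i in A.  On the other hand, d(A^perp) > |I_e| means no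
   nonzero word of A^perp is supported in I_e, i.e. restriction to I_e maps A
   onto F^(I_e); hence A(I_e) has codimension exactly t in A.  No other
   hypothesis of the theorem is needed. *)

Lemma big_minn_le (T : eqType) (r : seq T) (P : pred T) (G : T -> nat) m x :
  x \in r -> P x -> (\big[minn/m]_(i <- r | P i) G i <= G x)%N.
Proof.
elim: r => [//|i r IH]; rewrite inE big_cons => /orP[/eqP -> ->|xr Px].
  exact: geq_minl.
case: (P i); last exact: IH.
exact: leq_trans (geq_minr _ _) (IH xr Px).
Qed.

Section Codimension.
Variables (K : fieldType) (vT : vectType K).
Implicit Types A X Y : {vspace vT}.

Lemma codimv_cap A X Y a b :
  (\dim A <= \dim (A :&: X) + a)%N -> (\dim A <= \dim (A :&: Y) + b)%N ->
  (\dim A <= \dim (A :&: (X :&: Y)) + (a + b))%N.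
Proof.
have -> : (A :&: (X :&: Y) = (A :&: X) :&: (A :&: Y))%VS.
  by apply/vspaceP => v; rewrite !memv_cap; case: (v \in A).
have := dimv_sum_cap (A :&: X) (A :&: Y).
have : (\dim (A :&: X + A :&: Y) <= \dim A)%N.
  by apply/dimvS; rewrite subv_add !capvSl.
lia.
Qed.

Lemma codimv_bigcap (I : Type) (r : seq I) (X : I -> {vspace vT}) (d : I -> nat) A :
  (forall i, \dim A <= \dim (A :&: X i) + d i)%N ->
  (\dim A <= \dim (A :&: \bigcap_(i <- r) X i) + \sum_(i <- r) d i)%N.
Proof.
move=> codimX; elim: r => [|i r IH]; first by rewrite !big_nil capvf addn0.
by rewrite !big_cons; apply: codimv_cap.
Qed.

End Codimension.

Section RowVectors.
Variable F : finFieldType.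

Lemma dimv_rV k : \dim (fullv : {vspace 'rV[F]_k}) = k.
Proof. by rewrite dimvf dim_matrix mul1r. Qed.

Lemma span_enum_filter k (P : pred 'rV[F]_k) (U : {vspace 'rV[F]_k}) :
  (forall x, P x = (x \in U)) -> <<[seq v <- enum 'rV[F]_k | P v]>>%VS = U.
Proof.
move=> PU; apply/eqP; rewrite eqEsubv; apply/andP; split.
  by apply/span_subvP => x; rewrite mem_filter PU => /andP[].
by apply/subvP => x xU; apply: memv_span; rewrite mem_filter PU xU mem_enum.
Qed.

Lemma innerE k (u v : 'rV[F]_k) : inner u v = (u *m v^T) 0 0.
Proof. by rewrite /inner !mxE; apply: eq_bigr => j _; rewrite mxE. Qed.

Lemma innerC k (u v : 'rV[F]_k) : inner u v = inner v u.
Proof. by rewrite /inner; apply: eq_bigr => j _; rewrite mulrC. Qed.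

Lemma inner_mulmx_tr k m (x : 'rV[F]_m) (M : 'M[F]_(k, m)) (a : 'rV[F]_k) :
  inner (x *m M^T) a = inner x (a *m M).
Proof. by rewrite !innerE trmx_mul mulmxA. Qed.

Lemma smulv1 k (a : 'rV[F]_k) : smul a (const_mx 1) = a.
Proof. by apply/rowP => j; rewrite !mxE mulr1. Qed.

Lemma orthv_vbasis k (w : 'rV[F]_k) (V : {vspace 'rV[F]_k}) :
  (forall m : 'I_(\dim V), inner w (vbasis V)`_m = 0) ->
  forall v, v \in V -> inner w v = 0.
Proof.
move=> w_basis v /coord_vbasis ->; rewrite innerE linear_sum mulmx_sumr summxE.
by apply: big1 => m _; rewrite linearZ /= -scalemxAr mxE -innerE w_basis mulr0.
Qed.

Lemma dmin_le_weight n (A : {vspace 'rV[F]_n}) a :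
  a \in A -> a != 0 -> (dmin A <= weight a)%N.
Proof. by move=> aA a0; apply: big_minn_le; rewrite ?mem_index_enum ?aA. Qed.

End RowVectors.

Section Annihilator.
Variables (F : finFieldType) (k : nat).
Implicit Types (A V : {vspace 'rV[F]_k}) (u : 'rV[F]_k).

Definition annih_mx u V : 'M[F]_(k, \dim V) :=
  \matrix_(j, m) (u 0 j * (vbasis V)`_m 0 j).

Lemma annih_mxE a u V m : (a *m annih_mx u V) 0 m = inner (smul a u) (vbasis V)`_m.
Proof. by rewrite !mxE; apply: eq_bigr => j _; rewrite !mxE mulrA. Qed.

Lemma annih_kerE A u V :
  annih A u V = (A :&: lker (linfun (mulmxr (annih_mx u V))))%VS.
Proof.
apply: span_enum_filter => a; rewrite memv_cap memv_ker lfunE /=.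
congr (_ && _); apply/forallP/eqP => [orth | ker_a].
  apply/rowP => m; rewrite annih_mxE mxE.
  by apply/eqP; move: (orth (vbasis V)`_m); rewrite vbasis_mem ?mem_nth ?size_tuple.
move=> v; apply/implyP => vV; apply/eqP; apply: orthv_vbasis vV => m.
by rewrite -annih_mxE ker_a mxE.
Qed.

Lemma annih_subv A u V : (annih A u V <= A)%VS.
Proof. by rewrite annih_kerE capvSl. Qed.

Lemma annih_orth A u V a v :
  a \in annih A u V -> v \in V -> inner (smul a u) v = 0.
Proof.
rewrite annih_kerE memv_cap memv_ker lfunE /= => /andP[_ /eqP ker_a].
by apply: orthv_vbasis => m; rewrite -annih_mxE ker_a mxE.
Qed.

Lemma codimv_annih A u V : (\dim A <= \dim (A :&: annih A u V) + \dim V)%N.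
Proof.
rewrite (capv_idPr (annih_subv A u V)) annih_kerE.
rewrite -{1}(limg_ker_dim (linfun (mulmxr (annih_mx u V))) A) leq_add2l.
by apply: leq_trans (dimvS (subvf _)) _; rewrite dimv_rV.
Qed.

End Annihilator.

Lemma exists_orthv (F : finFieldType) k (U : {vspace 'rV[F]_k}) :
  (\dim U < k)%N -> exists2 x, x != 0 & forall u, u \in U -> inner x u = 0.
Proof.
move=> ltUk; set N := annih fullv (const_mx 1) U.
have N0 : N != 0%VS.
  apply: contraTneq (codimv_annih fullv (const_mx 1) U) => N0.
  by rewrite -/N N0 capv0 dimv0 dimv_rV -ltnNge.
exists (vpick N); first by rewrite vpick0.
by move=> u uU; rewrite -[vpick N]smulv1 (annih_orth (memv_pick N) uU).
Qed.

Lemma codimv_Mall (F : finFieldType) n (A B C : {vspace 'rV[F]_n}) y l :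
  (\dim A <= \dim (Mall A B C y l)
             + (\dim B + \sum_(2 <= i < l.+1) \dim (dual (star (dual B) (cpow C i.-1)))))%N.
Proof.
have MallA : (Mall A B C y l <= A)%VS.
  exact: subv_trans (capvSl _ _) (annih_subv _ _ _).
rewrite -(capv_idPr MallA); apply: codimv_cap; first exact: codimv_annih.
by apply: codimv_bigcap => i; apply: codimv_annih.
Qed.

Section Restriction.
Variables (F : finFieldType) (n : nat) (J : {set 'I_n}).

(* [a *m restr_mx] restricts [a] to [J]; [x *m restr_mx^T] extends [x] by zero. *)
Definition restr_mx : 'M[F]_(n, #|J|) := colsub (@enum_val _ (mem J)) 1%:M.

Lemma restr_mxK : restr_mx^T *m restr_mx = 1%:M.
Proof.
rewrite trmx_mxsub trmx1 mul_rowsub_mx mulmx_colsub mulmx1.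
by apply/matrixP => i j; rewrite !mxE (inj_eq enum_val_inj).
Qed.

Lemma supp_extend (x : 'rV[F]_#|J|) : supp (x *m restr_mx^T) \subset J.
Proof.
apply/subsetP => j; rewrite inE !mxE; apply: contraR => jNJ.
apply/eqP/big1 => i _; rewrite !mxE.
by case: eqP => [ji|]; [move: jNJ; rewrite ji enum_valP | rewrite mulr0].
Qed.

Lemma punct_zero_kerE (A : {vspace 'rV[F]_n}) :
  punct_zero A J = (A :&: lker (linfun (mulmxr restr_mx)))%VS.
Proof.
apply: span_enum_filter => a; rewrite memv_cap memv_ker lfunE /=.
rewrite /restr_mx mulmx_colsub mulmx1; congr (_ && _).
apply/forall_inP/eqP => [a0 | /rowP a0 j jJ].
  by apply/rowP => i; rewrite !mxE; apply/eqP/a0/enum_valP.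
by have := a0 (enum_rank_in jJ j); rewrite !mxE enum_rankK_in // => ->.
Qed.

Lemma dim_punct_zero (A : {vspace 'rV[F]_n}) :
  (#|J| < dmin (dual A))%N -> (\dim (punct_zero A J) + #|J|)%N = \dim A.
Proof.
move=> ltJd; rewrite punct_zero_kerE -(limg_ker_dim (linfun (mulmxr restr_mx)) A).
congr (_ + _)%N; apply/anti_leq/andP; split; last first.
  by apply: leq_trans (dimvS (subvf _)) _; rewrite dimv_rV.
rewrite leqNgt; apply/negP => /exists_orthv[x x0 x_orth].
set w := x *m restr_mx^T.
have w0 : w != 0.
  by apply: contraNneq x0 => w0; rewrite -[x]mulmx1 -restr_mxK mulmxA -/w w0 mul0mx.
have wA : w \in dual A.
  apply: memv_span; rewrite mem_filter mem_enum andbT.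
  apply/forall_inP => a aA; rewrite innerC inner_mulmx_tr x_orth //.
  by rewrite -[a *m _](lfunE (mulmxr restr_mx)) memv_img.
have := leq_trans (dmin_le_weight wA w0) (subset_leq_card (supp_extend x)).
by rewrite leqNgt ltJd.
Qed.

End Restriction.

Theorem theorem3p10 (F : finFieldType) (n l t : nat)
  (A B C : {vspace 'rV[F]_n}) (c e y : 'rV[F]_n) :
  (2 <= l)%N ->
  (star A B <= dual C)%VS ->
  (t < \dim A)%N ->
  (t < dmin (dual A))%N ->
  (n < dmin A + dmin C)%N ->
  c \in C -> weight e = t -> y = c + e ->
  punct_zero A (supp e) = Mall A B C y l ->
  (t <= \dim B + \sum_(2 <= i < l.+1) \dim (dual (star (dual B) (cpow C i.-1))))%N.
Proof.
move=> _ _ _ lt_e_dA _ _ we _ AeM; subst t.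
have := codimv_Mall A B C y l.
by rewrite -AeM -(dim_punct_zero lt_e_dA) leq_add2l.
Qed.
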